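(* Let $\mathfrak{g}$ be a finite-dimensional complex Lie algebra and let $\mathfrak{p}$ be a perfect Lie subalgebra of $\mathfrak{g}$ (i.e. $[\mathfrak{p},\mathfrak{p}]=\mathfrak{p}$). Then every CPA-structure on $\mathfrak{g}$ satisfies $\mathfrak{p}\cdot\mathfrak{g}=0$, i.e. $x\cdot y=0$ for all $x\in\mathfrak{p}$, $y\in\mathfrak{g}$.
   Context: A CPA-structure on a Lie algebra $\mathfrak{g}$ with bracket $[\,,]$ is a bilinear product $x\cdot y$ on $\mathfrak{g}$ satisfying, for all $x,y,z$: $x\cdot y=y\cdot x$; $[x,y]\cdot z=x\cdot(y\cdot z)-y\cdot(x\cdot z)$; $x\cdot[y,z]=[x\cdot y,z]+[y,x\cdot z]$. *)

(* The complex numbers are modelled as R[i] = complex R for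
   an arbitrary R : realType (every realType is a complete archimedean
   ordered field, i.e. a copy of the real numbers). *)
From HB Require Import structures.
From mathcomp Require Import all_boot all_order all_algebra.
From mathcomp Require Import reals.
From mathcomp Require Import complex.
Set Implicit Arguments. Unset Strict Implicit. Unset Printing Implicit Defensive.
Import Order.TTheory GRing.Theory Num.Theory.
Local Open Scope ring_scope.

Section LieDefs.
Variables (K : fieldType) (V : vectType K).

Definition bilinear_op (m : V -> V -> V) : Prop :=
  (forall (a : K) (x y z : V), m (a *: x + y) z = a *: m x z + m y z) /\
  (forall (a : K) (x y z : V), m x (a *: y + z) = a *: m x y + m x z).

Definition lie_bracket (br : V -> V -> V) : Prop :=
  [/\ bilinear_op br,
      (forall x : V, br x x = 0) &
      (forall x y z : V, br x (br y z) + br y (br z x) + br z (br x y) = 0)].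

Definition lie_subalgebra (br : V -> V -> V) (p : {vspace V}) : Prop :=
  forall x y, x \in p -> y \in p -> br x y \in p.

Definition in_derived (br : V -> V -> V) (p : {vspace V}) (z : V) : Prop :=
  exists n (xs ys : 'I_n -> V),
    (forall i, xs i \in p /\ ys i \in p) /\ z = \sum_(i < n) br (xs i) (ys i).

Definition perfect (br : V -> V -> V) (p : {vspace V}) : Prop :=
  (forall z, in_derived br p z -> z \in p) /\
  (forall z, z \in p -> in_derived br p z).

Definition CPA_structure (br : V -> V -> V) (m : V -> V -> V) : Prop :=
  [/\ bilinear_op m,
      (forall x y, m x y = m y x),
      (forall x y z, m (br x y) z = m x (m y z) - m y (m x z)) &
      (forall x y z, m x (br y z) = br (m x y) z + br y (m x z))].
End LieDefs.

From HB Require Import structures.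
From mathcomp Require Import all_boot all_order all_algebra.
From mathcomp Require Import reals complex.

(* For a CPA-structure, the derivation axiom x.[y,z] = [x.y,z] + [y,x.z], the
   representation axiom [x,y].z = x.(y.z) - y.(x.z) and commutativity give
   [a,b].(c.z) = [z,c].(a.b).  The left side is symmetric in c and z, the right
   side antisymmetric, so [g,g].(g.g) = 0.  If p = [p,p], each x in p is a sum
   of brackets [u,v] with u, v in p, and then
   [u,v].y = u.(v.y) - v.(u.y) lies in [p,p].(g.g) = 0. *)

Set Implicit Arguments. Unset Strict Implicit. Unset Printing Implicit Defensive.
Import GRing.Theory Num.Theory.
Local Open Scope ring_scope.

Section Bilinear.
Variables (K : fieldType) (V : vectType K) (f : V -> V -> V).
Hypothesis f_bilin : bilinear_op f.

Lemma opDl x y z : f (x + y) z = f x z + f y z.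
Proof. by have := f_bilin.1 1 x y z; rewrite !scale1r. Qed.

Lemma op0l z : f 0 z = 0.
Proof. by apply: (@addrI _ (f 0 z)); rewrite -opDl !addr0. Qed.

Lemma opNl x z : f (- x) z = - f x z.
Proof. by apply/eqP; rewrite -addr_eq0 -opDl addNr op0l. Qed.

Lemma opDr x y z : f x (y + z) = f x y + f x z.
Proof. by have := f_bilin.2 1 x y z; rewrite !scale1r. Qed.

Lemma op0r x : f x 0 = 0.
Proof. by apply: (@addrI _ (f x 0)); rewrite -opDr !addr0. Qed.

Lemma opNr x y : f x (- y) = - f x y.
Proof. by apply/eqP; rewrite -addr_eq0 -opDr addNr op0r. Qed.

Lemma opBr x y z : f x (y - z) = f x y - f x z.
Proof. by rewrite opDr opNr. Qed.

Lemma op_suml n (xs : 'I_n -> V) z :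
  f (\sum_(i < n) xs i) z = \sum_(i < n) f (xs i) z.
Proof. exact: (big_morph (f^~ z) (fun x y => opDl x y z) (op0l z)). Qed.

End Bilinear.

Section CPA.
Variables (K : fieldType) (V : vectType K) (br m : V -> V -> V).
Hypotheses (br_lie : lie_bracket br) (m_cpa : CPA_structure br m).

Let br_bilin : bilinear_op br. Proof. by case: br_lie. Qed.
Let m_bilin : bilinear_op m. Proof. by case: m_cpa. Qed.

Lemma brC x y : br x y = - br y x.
Proof.
have brxx u : br u u = 0 by case: br_lie.
apply/eqP; rewrite -addr_eq0; have := brxx (x + y).
by rewrite !(opDl br_bilin) !(opDr br_bilin) !brxx add0r addr0 => ->.
Qed.

Lemma mulC x y : m x y = m y x.
Proof. by case: m_cpa. Qed.

Lemma mul_brl x y z : m (br x y) z = m x (m y z) - m y (m x z).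
Proof. by case: m_cpa. Qed.

Lemma mul_brr x y z : m x (br y z) = br (m x y) z + br y (m x z).
Proof. by case: m_cpa. Qed.

Lemma mul_br x y z : m z (br x y) = m x (m y z) - m y (m x z).
Proof. by rewrite mulC mul_brl. Qed.

Lemma mul_mulC x y z : m x (m y z) = m y (m x z) + m (br x y) z.
Proof. by rewrite mul_brl addrC subrK. Qed.

Lemma br_mulr x y z : br y (m x z) = m x (br y z) + br z (m x y).
Proof. by rewrite mul_brr [br (m x y) z]brC addrAC addNr add0r. Qed.

Lemma mul_br_cycle x y z : m x (br y z) + m y (br z x) + m z (br x y) = 0.
Proof.
rewrite !mul_brr (mulC y x) (mulC z x) (mulC z y).
rewrite [br z _]brC [br (m x z) y]brC [br x _]brC.
by rewrite addrACA addrK addrAC subrr add0r subrr.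
Qed.

Lemma br_mul_mulC a b c z : m (br a b) (m c z) = m (br z c) (m a b).
Proof.
have mulDr := opDr m_bilin; have mulBr := opBr m_bilin.
set X := m (br a z) (br b c); set Y := m (m a c) (m b z).
set P := m c (m a (m b z)); set Q := m z (m b (m a c)).
set Rc := m c (m z (m a b)); set Rz := m z (m c (m a b)).
have cycle_abw : m (br a b) (m c z) = m b (br a (m c z)) - m a (br b (m c z)).
  have := mul_br_cycle (m c z) a b.
  rewrite (mulC (m c z)) [br (m c z) a]brC (opNr m_bilin).
  by move=> /subr0_eq/(canRL (addrK _)).
have br_aw : m b (br a (m c z)) = P - Rc + X + (Q - Y).
  rewrite br_mulr mulDr mul_mulC (mulC (br b c)) -/X.
  rewrite mul_br mulBr (mulC z b) -/P -/Rc.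
  by rewrite mul_br (mulC _ b) (mulC c a) (mulC z b) -/Q -/Y.
have br_bw : m a (br b (m c z)) = Q - Rz + X + (P - Y).
  rewrite (mulC c z) br_mulr mulDr mul_mulC -/X.
  rewrite mul_br mulBr (mulC c a) (mulC b a) -/Q -/Rz.
  rewrite mul_br (mulC _ a) (mulC z b) -/P.
  by rewrite (mulC (m b z) (m c a)) (mulC c a) -/Y.
rewrite cycle_abw br_aw br_bw mul_brl -/Rz -/Rc.
(* X, Y, P and Q cancel. *)
rewrite (addrAC (Q - Rz) X) (addrAC (P - Rc) X) (addrC (Q - Rz + (P - Y)) X) addrKA.
rewrite (addrAC P) (addrAC Q) (addrCA Q).
by rewrite opprB addrC addrACA subrr addr0 addrC.
Qed.

Hypothesis two_neq0 : 2%:R != 0 :> K.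

Lemma br_mul_mul_eq0 a b c z : m (br a b) (m c z) = 0.
Proof.
have : m (br a b) (m c z) = - m (br a b) (m c z).
  rewrite {1}(mulC c z) (br_mul_mulC a b z c) (br_mul_mulC a b c z).
  by rewrite [br c z]brC (opNl m_bilin).
move/eqP; rewrite -addr_eq0 -mulr2n -scaler_nat scaler_eq0.
by rewrite (negbTE two_neq0) => /eqP.
Qed.

Lemma derived_mul_mul_eq0 (p : {vspace V}) u x y :
  in_derived br p u -> m u (m x y) = 0.
Proof.
case=> n [xs] [ys] [_ ->]; rewrite (op_suml m_bilin).
by apply: big1 => i _; apply: br_mul_mul_eq0.
Qed.

Lemma perfect_mul_eq0 (p : {vspace V}) :
  (forall u, u \in p -> in_derived br p u) -> forall x y, x \in p -> m x y = 0.
Proof.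
move=> p_derived x y /p_derived [n] [xs] [ys] [xys_p ->].
rewrite (op_suml m_bilin); apply: big1 => i _; rewrite mul_brl.
have [/p_derived xs_p /p_derived ys_p] := xys_p i.
by rewrite (derived_mul_mul_eq0 _ _ xs_p) (derived_mul_mul_eq0 _ _ ys_p) subrr.
Qed.

End CPA.

Theorem theorem3p4 (R : realType) (V : vectType R[i])
    (br : V -> V -> V) (p : {vspace V}) (m : V -> V -> V) :
  lie_bracket br -> lie_subalgebra br p -> perfect br p ->
  CPA_structure br m ->
  forall x y : V, x \in p -> m x y = 0.
Proof.
move=> br_lie _ [_ p_derived] m_cpa.
have two_neq0 : 2%:R != 0 :> R[i] by rewrite pnatr_eq0.
exact: (perfect_mul_eq0 br_lie m_cpa two_neq0 p_derived).
Qed.
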